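(* For every $t\ge2$, every sequence $\theta_1,\dots,\theta_{t-1}\in\Theta$, and every $\theta\in\Theta$, the effective number of trajectories satisfies $\eta_t(\theta)\ge T_t(\theta)$. Moreover, if $v(\theta)=\sup_{\theta'\in\Theta}d_2(p_\theta\|p_{\theta'})$ is finite, then $\eta_t(\theta)\ge\frac{t-1}{v(\theta)}$.
   Context: Each $\theta\in\Theta$ defines a policy inducing a trajectory distribution $p_\theta$. For probability measures $P\ll Q$, $d_2(P\|Q)=\int(\frac{dP}{dQ})^2dQ$ ($+\infty$ if $P\not\ll Q$). Given previously executed parameters $\theta_1,\dots,\theta_{t-1}$, $\Phi_t=\frac1{t-1}\sum_{i=1}^{t-1}p_{\theta_i}$, $\eta_t(\theta)=\frac{t-1}{d_2(p_\theta\|\Phi_t)}$ (equal to $0$ if the divergence is infinite), and $T_t(\theta)=\sum_{i=1}^{t-1}\mathbb 1\{\theta_i=\theta\}$. *)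

From HB Require Import structures.
From mathcomp Require Import all_boot all_order all_algebra.
From mathcomp Require Import all_classical all_reals all_analysis.
Set Implicit Arguments. Unset Strict Implicit. Unset Printing Implicit Defensive.
Import Order.TTheory GRing.Theory Num.Theory.
Local Open Scope classical_set_scope.
Local Open Scope ring_scope.

Section mixture.
Local Open Scope ereal_scope.
Context d (T : measurableType d) (R : realType).
Variables (n : nat) (P : 'I_n -> probability T R).

Definition mixture (A : set T) : \bar R :=
  ((n%:R)^-1)%:E * \sum_(i < n) P i A.

Let mixture0 : mixture set0 = 0.
Proof. by rewrite /mixture big1 ?mule0 // => i _; rewrite measure0. Qed.

Let mixture_ge0 A : 0 <= mixture A.
Proof.
rewrite /mixture; apply: mule_ge0; first by rewrite lee_fin invr_ge0.
by apply: sume_ge0 => i _.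
Qed.

Let mixture_sigma_additive : semi_sigma_additive mixture.
Proof.
move=> F mF tF mUF; rewrite /mixture.
rewrite [X in X @ _ --> _](_ : _ = (fun N => ((n%:R)^-1)%:E *
    \sum_(0 <= j < N) \sum_(i < n) P i (F j))); last first.
  apply/funext => N; rewrite ge0_sume_distrr // => j _.
  by apply: sume_ge0 => i _.
apply: cvgeZl => //.
rewrite [X in _ --> X](_ : _ =
    lim ((fun N => \sum_(0 <= j < N) \sum_(i < n) P i (F j)) @ \oo)).
  by apply: is_cvg_ereal_nneg_natsum => k _; exact: sume_ge0.
rewrite nneseries_sum//; apply: eq_bigr => /= i _.
exact: measure_semi_bigcup.
Qed.

HB.instance Definition _ := isMeasure.Build _ _ _ mixture
  mixture0 mixture_ge0 mixture_sigma_additive.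

Let mixture_fin : fin_num_fun mixture.
Proof.
move=> U mU; rewrite /mixture fin_numM //.
by apply/sum_fin_numP => i _ _; rewrite fin_num_measure.
Qed.

HB.instance Definition _ := Measure_isFinite.Build _ _ _ mixture mixture_fin.

End mixture.

Section divergence.
Local Open Scope ereal_scope.
Local Open Scope charge_scope.
Context d (T : measurableType d) (R : realType).

Definition d2 (P : probability T R) (Q : {finite_measure set T -> \bar R}) : \bar R :=
  if pselect (P `<< Q) then
    \int[Q]_x (('d (charge_of_finite_measure P) '/d Q) x ^+ 2)
  else +oo.

End divergence.

Section effective_number.
Context d (T : measurableType d) (R : realType) (Theta : Type).
Variable p : Theta -> probability T R.

(* Phi_t = (1/(t-1)) sum_{i=1}^{t-1} p_{theta_i}; the sequence
   theta_1..theta_{t-1} is ths : 'I_(t.-1) -> Theta (0-indexed). *)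
Definition Phi (t : nat) (ths : 'I_t.-1 -> Theta) :
  {finite_measure set T -> \bar R} := mixture (fun i => p (ths i)).

Definition eta_t (t : nat) (ths : 'I_t.-1 -> Theta) (th : Theta) : R :=
  match d2 (p th) (Phi ths) with
  | r%:E => (t.-1)%:R / r
  | _ => 0
  end.

Definition Tcount (t : nat) (ths : 'I_t.-1 -> Theta) (th : Theta) : nat :=
  \sum_(i < t.-1) (if `[< ths i = th >] then 1 else 0)%N.

Definition vsup (th : Theta) : \bar R :=
  ereal_sup [set d2 (p th) (p th') | th' in [set: Theta]].

End effective_number.

From HB Require Import structures.
From mathcomp Require Import all_boot all_order all_algebra.
From mathcomp Require Import all_classical all_reals all_analysis.
From mathcomp Require Import measurable_realfun.
From mathcomp Require Import ring lra.
Import Order.TTheory GRing.Theory Num.Theory.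
Local Open Scope classical_set_scope.
Local Open Scope ring_scope.

(* If theta occurs T times among theta_1, ..., theta_(t-1), then
   p_theta <= ((t-1)/T) Phi_t, so the density g = dp_theta/dPhi_t is at most
   (t-1)/T almost everywhere and d_2(p_theta || Phi_t) = int g^2 dPhi_t
   <= ((t-1)/T) int g dPhi_t = (t-1)/T.
   For the second bound, write g = g_i k_i with g_i = dp_theta/dp_theta_i and
   k_i = dp_theta_i/dPhi_t; since sum_i k_i = t-1, pointwise
   (t-1) g^2 <= sum_i g_i^2 k_i, and integrating gives the convexity bound
   (t-1) d_2(p_theta || Phi_t) <= sum_i d_2(p_theta || p_theta_i)
                               <= (t-1) v(theta).
   In both cases d_2(p_theta || Phi_t) >= (int g dPhi_t)^2 = 1, so
   eta_t = (t-1)/d_2 is bounded below as claimed. *)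

(* [RNSF.f P Q] is a version of dP/dQ that is nonnegative and finite
   everywhere; by [d2E] it can replace the derivative of the charge in [d2]. *)
Module RNSF := Radon_Nikodym_SigmaFinite.

Section integral_facts.
Local Open Scope ereal_scope.
Context {d} {T : measurableType d} {R : realType}.

Lemma measurable_fun_sqre (D : set T) (f : T -> \bar R) :
  measurable_fun D f -> measurable_fun D (fun x => f x ^+ 2).
Proof.
move=> mf; rewrite (_ : (fun x => f x ^+ 2) = f \* f).
  exact: emeasurable_funM.
by apply/funext => x; rewrite expe2.
Qed.

Lemma measure0_of_integral_le0 (mu : {measure set T -> \bar R}) (A : set T)
    (f : T -> \bar R) :
  measurable A -> measurable_fun A f -> (forall x, A x -> 0 < f x) ->
  \int[mu]_(x in A) f x <= 0 -> mu A = 0.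
Proof.
move=> mA mf f_gt0 int_le0.
have : \int[mu]_(x in A) `|f x| = 0.
  rewrite (eq_integral f) => [|x /[!inE] Ax]; last by rewrite gte0_abs ?f_gt0.
  by apply/eqP; rewrite eq_le int_le0 integral_ge0 // => x /f_gt0/ltW.
move/(ae_eq_integral_abs mu mA mf) => [N [mN N0 sub]].
apply/eqP; rewrite -measure_le0 -N0 le_measure ?inE //.
move=> x Ax; apply: sub => /= /(_ Ax) fx0.
by have := f_gt0 x Ax; rewrite fx0 ltxx.
Qed.

Lemma measurable_density {nu : {finite_measure set T -> \bar R}}
    {mu : {sigma_finite_measure set T -> \bar R}} :
  nu `<< mu -> measurable_fun setT (RNSF.f nu mu).
Proof. by move=> numu; exact: measurable_int (RNSF.f_integrable numu). Qed.

End integral_facts.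

Section d2_density.
Local Open Scope ereal_scope.
Local Open Scope charge_scope.
Context {d} {T : measurableType d} {R : realType}.
Context {P : probability T R} {Q : {finite_measure set T -> \bar R}}.
Local Notation f := (RNSF.f P Q).

Lemma d2_ndom : ~ P `<< Q -> d2 P Q = +oo.
Proof. by rewrite /d2; case: pselect. Qed.

Lemma d2E : P `<< Q -> d2 P Q = \int[Q]_x (f x ^+ 2).
Proof.
move=> PQ; have -> : d2 P Q =
    \int[Q]_x (('d (charge_of_finite_measure P) '/d Q) x ^+ 2).
  by rewrite /d2; case: pselect.
have mf := measurable_density PQ.
apply: ae_eq_integral => //; try exact: measurable_fun_sqre.
apply: filterS (ae_eq_Radon_Nikodym_SigmaFinite PQ measurableT).
by move=> x fx Tx; rewrite fx.
Qed.

Lemma d2_ge0 : 0 <= d2 P Q.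
Proof.
have [PQ|nPQ] := pselect (P `<< Q); last by rewrite d2_ndom.
by rewrite d2E // integral_ge0 // => x _; exact: sqre_ge0.
Qed.

Lemma integral_density : P `<< Q -> \int[Q]_x f x = 1.
Proof.
by move=> PQ; rewrite -(RNSF.f_integral PQ) //; exact: probability_setT.
Qed.

Lemma d2_ge1 : Q setT = 1 -> 1 <= d2 P Q.
Proof.
move=> Q1; have [PQ|nPQ] := pselect (P `<< Q); last by rewrite d2_ndom ?leey.
have f_ge0 := RNSF.f_ge0 PQ.
have mf := measurable_density PQ.
suff : 2%:E <= 1 + d2 P Q.
  by rewrite -leeBlDl // -EFinB; apply: le_trans; rewrite lee_fin; lra.
have -> : 2%:E = \int[Q]_x (2%:E * f x).
  by rewrite ge0_integralZl_EFin // integral_density // mule1.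
have -> : 1 = \int[Q]_x (cst 1 x) by rewrite integral_cst // mul1e; exact/esym.
rewrite d2E // -ge0_integralD //; last 2 first.
  - by move=> x _; exact: sqre_ge0.
  - exact: measurable_fun_sqre.
apply: ge0_le_integral => //.
- by move=> x _; rewrite mule_ge0.
- exact: emeasurable_funM.
- by apply: emeasurable_funD => //; exact: measurable_fun_sqre.
move=> x _; have /fineK <- := RNSF.f_fin_num PQ x.
rewrite /= -!EFinM -EFinD lee_fin.
by have := sqr_ge0 (fine (f x) - 1); nra.
Qed.

Lemma density_le_ae (c : R) : P `<< Q ->
    (forall A, measurable A -> P A <= c%:E * Q A) ->
  {ae Q, forall x, f x <= c%:E}.
Proof.
move=> PQ PcQ; have mf := measurable_density PQ.
have mA : measurable [set x | c%:E < f x].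
  by rewrite -[X in measurable X]setTI; exact: measurable_lte.
exists [set x | c%:E < f x]; split => //; last first.
  by move=> x /= /negP; rewrite -ltNge.
apply: (@measure0_of_integral_le0 _ _ _ _ _ (fun x => f x - c%:E)) => //.
- apply: emeasurable_funB; first exact: measurable_funS mf.
  exact/measurable_EFinP/measurable_cst.
- by move=> x cf; rewrite sube_gt0.
rewrite integralB //; last 2 first.
  - exact: integrableS (RNSF.f_integrable PQ).
  - exact: finite_measure_integrable_cst.
by rewrite -RNSF.f_integral // integral_cst // sube_le0 PcQ.
Qed.

Lemma d2_le_of_le_scale (c : R) : (0 <= c)%R ->
  (forall A, measurable A -> P A <= c%:E * Q A) -> d2 P Q <= c%:E.
Proof.
move=> c_ge0 PcQ.
have PQ : P `<< Q.
  apply/null_content_dominatesP => A mA QA0; apply/eqP.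
  by rewrite eq_le measure_ge0 andbT -(mule0 c%:E) -QA0 PcQ.
have f_ge0 := RNSF.f_ge0 PQ.
have mf := measurable_density PQ.
rewrite d2E //; apply: (@le_trans _ _ (\int[Q]_x (c%:E * f x))).
  apply: ae_ge0_le_integral => //.
  - by move=> x _; exact: sqre_ge0.
  - exact: measurable_fun_sqre.
  - by move=> x _; rewrite mule_ge0.
  - exact: emeasurable_funM.
  apply: filterS (density_le_ae c PQ PcQ) => x f_le _.
  by rewrite expe2 lee_wpmul2r.
by rewrite ge0_integralZl_EFin // integral_density // mule1.
Qed.

End d2_density.

Lemma sum_weighted_sqr_ge (R : realDomainType) (n : nat) (y : R)
    (x w : 'I_n -> R) :
  (forall i, 0 <= w i) -> (forall i, y = x i * w i) -> \sum_i w i = n%:R ->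
  n%:R * y ^+ 2 <= \sum_i x i ^+ 2 * w i.
Proof.
move=> w_ge0 yE sum_w.
have le_i i : 2 * y ^+ 2 - y ^+ 2 * w i <= x i ^+ 2 * w i.
  rewrite (yE i) -subr_ge0.
  have -> : x i ^+ 2 * w i - (2 * (x i * w i) ^+ 2 - (x i * w i) ^+ 2 * w i)
      = w i * (x i - x i * w i) ^+ 2 by ring.
  by rewrite mulr_ge0 ?sqr_ge0.
apply: le_trans (ler_sum _ (fun i _ => le_i i)).
by rewrite sumrB sumr_const card_ord -mulr_sumr sum_w -mulr_natl; lra.
Qed.

Section mixture_lemmas.
Local Open Scope ereal_scope.
Context {d} {T : measurableType d} {R : realType}.
Context {n : nat} (Qs : 'I_n -> probability T R).
Local Notation M := (mixture Qs).

Lemma mixtureE A : (0 < n)%N -> n%:R%:E * M A = \sum_(i < n) Qs i A.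
Proof.
move=> n_gt0; rewrite /mixture muleA -EFinM divff ?mul1e //.
by rewrite pnatr_eq0 -lt0n.
Qed.

Lemma mixture_setT : (0 < n)%N -> M setT = 1.
Proof.
move=> n_gt0; rewrite /mixture.
under eq_bigr do rewrite probability_setT.
by rewrite sumEFin sumr_const card_ord -EFinM mulVf // pnatr_eq0 -lt0n.
Qed.

Lemma le_mixture i A : Qs i A <= n%:R%:E * M A.
Proof.
rewrite mixtureE; last exact: leq_ltn_trans (leq0n i) (ltn_ord i).
by rewrite (bigD1 i) //= leeDl // sume_ge0.
Qed.

Lemma mixture_dominates i : Qs i `<< M.
Proof.
apply/null_content_dominatesP => A mA MA0; apply/eqP.
by rewrite eq_le measure_ge0 andbT -(mule0 n%:R%:E) -MA0 le_mixture.
Qed.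

End mixture_lemmas.

Section d2_mixture.
Local Open Scope ereal_scope.
Context {d} {T : measurableType d} {R : realType}.
Variables (n : nat) (Qs : 'I_n -> probability T R) (P : probability T R).
Hypothesis n_gt0 : (0 < n)%N.
Local Notation M := (mixture Qs).
Local Notation k i := (RNSF.f (Qs i) M).

Lemma sum_density_mixture : {ae M, forall x, \sum_(i < n) k i x = n%:R%:E}.
Proof.
have kM (i : 'I_n) : M.-integrable setT (k i).
  exact: RNSF.f_integrable (mixture_dominates Qs i).
have : ae_eq M setT (fun x => \sum_(i < n) k i x) (cst n%:R%:E).
  apply: integral_ae_eq => //.
    by apply: integrable_sum => // i _; exact: kM.
  move=> E _ mE; rewrite integral_sum //; last first.
    by move=> i; exact: integrableS measurableT mE (subsetT E) (kM i).
  rewrite integral_cst // mixtureE //; apply: eq_bigr => i _.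
  by rewrite -(RNSF.f_integral (mixture_dominates Qs i)).
by apply: filterS => x /(_ I).
Qed.

Section dominated.
Hypothesis PQs : forall i, P `<< Qs i.

Let PM : P `<< M.
Proof.
pose i0 := Ordinal n_gt0.
exact: null_dominates_trans (PQs i0) (mixture_dominates Qs i0).
Qed.

Lemma density_mixture_ae :
  {ae M, forall x, n%:R%:E * RNSF.f P M x ^+ 2 <=
                   \sum_(i < n) RNSF.f P (Qs i) x ^+ 2 * k i x}.
Proof.
have chain (i : 'I_n) :=
  RNSF.chain_rule (PQs i) (mixture_dominates Qs i) measurableT.
have := filter_forall (ae_filter_ringOfSetsType M) chain.
apply: filterS2 sum_density_mixture => x sum_k fE.
have fin_k (i : 'I_n) := RNSF.f_fin_num (mixture_dominates Qs i) x.
have fin_f (i : 'I_n) := RNSF.f_fin_num (PQs i) x.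
have fin_g := RNSF.f_fin_num PM x.
rewrite -(fineK fin_g).
under eq_bigr => i _ do rewrite -(fineK (fin_f i)) -(fineK (fin_k i)).
rewrite -EFin_expe -EFinM.
under eq_bigr do rewrite -EFin_expe -EFinM.
rewrite sumEFin lee_fin; apply: sum_weighted_sqr_ge.
- move=> i; rewrite -lee_fin fineK //.
  exact: RNSF.f_ge0 (mixture_dominates Qs i) x.
- by move=> i; apply: EFin_inj; rewrite EFinM !fineK // (fE i I).
- apply: EFin_inj; rewrite -sumEFin -sum_k.
  by apply: eq_bigr => i _; rewrite fineK.
Qed.

Lemma sum_d2_integral_mixture :
  \sum_(i < n) d2 P (Qs i) =
  \int[M]_x \sum_(i < n) (RNSF.f P (Qs i) x ^+ 2 * k i x).
Proof.
have MQ := mixture_dominates Qs.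
rewrite ge0_integral_sum //; last 2 first.
- move=> i; apply: emeasurable_funM; last exact: measurable_density (MQ i).
  exact/measurable_fun_sqre/measurable_density/PQs.
- by move=> i x _; rewrite mule_ge0 ?sqre_ge0 //; exact: RNSF.f_ge0 (MQ i) x.
apply: eq_bigr => i _; rewrite (d2E (PQs i)); symmetry.
apply: (RNSF.change_of_variables (MQ i)) => //.
- by move=> x; exact: sqre_ge0.
- exact/measurable_fun_sqre/measurable_density/PQs.
Qed.

Lemma d2_mixture_le_sum_dominated :
  n%:R%:E * d2 P M <= \sum_(i < n) d2 P (Qs i).
Proof.
have MQ := mixture_dominates Qs.
rewrite d2E // sum_d2_integral_mixture -ge0_integralZl_EFin //; last 2 first.
- by move=> x _; exact: sqre_ge0.
- exact/measurable_fun_sqre/measurable_density/PM.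
apply: ae_ge0_le_integral => //.
- by move=> x _; rewrite mule_ge0 ?sqre_ge0.
- apply: emeasurable_funM => //.
  exact/measurable_fun_sqre/measurable_density/PM.
- move=> x _; apply: sume_ge0 => i _; rewrite mule_ge0 ?sqre_ge0 //.
  exact: RNSF.f_ge0 (MQ i) x.
- apply: emeasurable_fun_sum => i; apply: emeasurable_funM.
    exact/measurable_fun_sqre/measurable_density/PQs.
  exact: measurable_density (MQ i).
by apply: filterS density_mixture_ae => x le_x _.
Qed.

End dominated.

Lemma d2_mixture_le_sum : n%:R%:E * d2 P M <= \sum_(i < n) d2 P (Qs i).
Proof.
have [PQs|/existsNP [i nPQi]] := pselect (forall i, P `<< Qs i).
  exact: d2_mixture_le_sum_dominated.
suff -> : \sum_(i < n) d2 P (Qs i) = +oo by rewrite leey.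
apply/esum_eqyP.
  by move=> j _; rewrite gt_eqF // (lt_le_trans ltNy0 d2_ge0).
by exists i; split => //; exact: d2_ndom.
Qed.

End d2_mixture.

Section effective_number.
Local Open Scope ereal_scope.
Context {d} {X : measurableType d} {R : realType} {Theta : Type}.
Variables (p : Theta -> probability X R) (t : nat).
Variables (ths : 'I_t.-1 -> Theta) (th : Theta).

Lemma Tcount_le_sum A :
  (Tcount ths th)%:R%:E * p th A <= \sum_(i < t.-1) p (ths i) A.
Proof.
rewrite /Tcount natr_sum -sumEFin ge0_sume_distrl; last first.
  by move=> i _; rewrite lee_fin; case: ifP.
apply: lee_sum => i _; case: asboolP => [->|_] /=; first by rewrite mul1e.
by rewrite mul0e measure_ge0.
Qed.

Lemma eta_t_ge0 : (0 <= eta_t p ths th)%R.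
Proof.
rewrite /eta_t; have := @d2_ge0 _ _ _ (p th) (Phi p ths).
by case: (d2 _ _) => // r; rewrite lee_fin => r0; rewrite divr_ge0.
Qed.

Hypothesis t_ge2 : (2 <= t)%N.

Let n_gt0 : (0 < t.-1)%N.
Proof. by rewrite -subn1 subn_gt0. Qed.

Lemma le_eta_t_of_d2_le (b : R) :
  d2 (p th) (Phi p ths) <= b%:E -> (t.-1%:R / b <= eta_t p ths th)%R.
Proof.
have := @d2_ge1 _ _ _ (p th) (Phi p ths) (mixture_setT _ n_gt0).
rewrite /eta_t; case: (d2 _ _) => // r; rewrite !lee_fin => r_ge1 r_le_b.
rewrite ler_wpM2l // lef_pV2 ?posrE //; lra.
Qed.

Lemma Tcount_le_eta_t : ((Tcount ths th)%:R <= eta_t p ths th)%R.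
Proof.
have [->|T_neq0] := eqVneq (Tcount ths th) 0%N; first exact: eta_t_ge0.
have T_gt0 : (0 < (Tcount ths th)%:R :> R)%R by rewrite ltr0n lt0n.
pose c : R := (t.-1%:R / (Tcount ths th)%:R)%R.
have -> : (Tcount ths th)%:R = (t.-1%:R / c)%R :> R.
  by rewrite /c invf_div mulrCA divff ?mulr1 // pnatr_eq0 -lt0n.
apply: le_eta_t_of_d2_le; apply: d2_le_of_le_scale; first by rewrite divr_ge0.
move=> A mA; rewrite /c (mulrC t.-1%:R) EFinM -muleA /Phi mixtureE //.
by rewrite lee_pdivlMl //; exact: Tcount_le_sum.
Qed.

Lemma d2_Phi_le_vsup : d2 (p th) (Phi p ths) <= vsup p th.
Proof.
have n_pos : 0 < t.-1%:R%:E :> \bar R by rewrite lte_fin ltr0n.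
rewrite -(lee_pmul2l _ n_pos) // /Phi.
apply: le_trans (d2_mixture_le_sum _ _ _ n_gt0) _.
apply: (@le_trans _ _ (\sum_(i < t.-1) vsup p th)).
  by apply: lee_sum => i _; apply: ereal_sup_ubound; exists (ths i).
by rewrite sumr_const card_ord mule_natl.
Qed.

Lemma div_vsup_le_eta_t : vsup p th \is a fin_num ->
  (t.-1%:R / fine (vsup p th) <= eta_t p ths th)%R.
Proof.
by move=> v_fin; apply: le_eta_t_of_d2_le; rewrite fineK // d2_Phi_le_vsup.
Qed.

End effective_number.

Theorem lemma4 (R : realType) (d : measure_display) (X : measurableType d)
  (Theta : Type) (p : Theta -> probability X R) (t : nat) :
  (2 <= t)%N ->
  forall (ths : 'I_t.-1 -> Theta) (th : Theta),
    (Tcount ths th)%:R <= eta_t p ths th /\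
    (vsup p th \is a fin_num -> (t.-1)%:R / fine (vsup p th) <= eta_t p ths th).
Proof.
move=> t_ge2 ths th; split; first exact: Tcount_le_eta_t.
exact: div_vsup_le_eta_t.
Qed.
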